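(* Let $k\ge4$ be an integer and $\eta\in[\eta_{k+1},\eta_k)$. Then $0,1\in\mathrm{co}(V_k)$, where $V_k=\{b_0,z_0,z_1,\dots,z_k,w_1,\dots,w_k\}$.
   Context: For $\eta\in(0,\pi/3)$ let $a=\frac{e^{-i\eta}}{2\cos\eta}$, $c=\frac{1}{1-|a|^4}$, and for integers $j\ge0$ put $z_j=ca^{j+1}$, $w_j=1-c|a|^2a^j$, $b_0=a+c|a|^4$. For integers $k\ge1$ let $\Phi_k(\eta)=(1-|a|^4)\sin((k-1)\eta)-|a|^3\sin((k-2)\eta)+|a|^k\sin\eta$; for each $k\ge4$, $\Phi_k$ has a unique zero in $(\pi/k,\pi/(k-1))$, denoted $\eta_k$. $\mathrm{co}$ denotes convex hull. *)

From Stdlib Require Import Reals List.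
From Coquelicot Require Import Coquelicot.
Import ListNotations.
Open Scope R_scope.

(* a = e^{-i eta} / (2 cos eta) *)
Definition a_of (eta : R) : C := ((cos eta / (2 * cos eta)), (- sin eta / (2 * cos eta))).
(* |a| = 1/(2 cos eta) (eta in (0,pi/3) so cos eta > 0) *)
Definition absa (eta : R) : R := Cmod (a_of eta).
Definition c_of (eta : R) : R := 1 / (1 - absa eta ^ 4).

Definition z_of (eta : R) (j : nat) : C := (RtoC (c_of eta) * (a_of eta) ^ (S j))%C.
Definition w_of (eta : R) (j : nat) : C :=
  (RtoC 1 - RtoC (c_of eta * absa eta ^ 2) * (a_of eta) ^ j)%C.
Definition b0_of (eta : R) : C := (a_of eta + RtoC (c_of eta * absa eta ^ 4))%C.

Definition Phi (k : nat) (eta : R) : R :=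
  (1 - absa eta ^ 4) * sin ((INR k - 1) * eta)
  - absa eta ^ 3 * sin ((INR k - 2) * eta)
  + absa eta ^ k * sin eta.

Definition V_of (eta : R) (k : nat) : list C :=
  b0_of eta :: map (z_of eta) (List.seq 0 (S k)) ++ map (w_of eta) (List.seq 1 k).

Definition in_co (pts : list C) (p : C) : Prop :=
  exists l : list R,
    List.length l = List.length pts /\ List.Forall (fun t => 0 <= t) l /\
    fold_right Rplus 0 l = 1 /\
    fold_right Cplus (RtoC 0) (map (fun q : R * C => (RtoC (fst q) * snd q)%C) (combine l pts)) = p.

(** The point [0] lies strictly inside the triangle [z_(k-2) z_k w_k] and the
    point [1] strictly inside [z_0 w_1 w_k].  With [r = |a| = 1/(2 cos eta)]
    one has [a^n = r^n e^{-i n eta}], hence [z_j = c r^(j+1) e^{-i (j+1) eta}]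
    and [w_j = 1 - c r^(j+2) e^{-i j eta}], and the orientation of each
    triangle seen from the point becomes a sign condition on sines.  All of
    them follow from [(k-1) eta < pi < (k+1) eta], except
    [sin (k eta) < c r sin ((k-1) eta)], which comes from
    [sin ((k-1) eta) + sin ((k+1) eta) = 2 cos eta sin (k eta)],
    [sin ((k+1) eta) < 0] and [c >= 1]. *)

From Stdlib Require Import Reals List Lra Lia.
From Coquelicot Require Import Coquelicot.
Open Scope R_scope.

Lemma C_ext (x y : C) : fst x = fst y -> snd x = snd y -> x = y.
Proof. destruct x, y; simpl; now intros -> ->. Qed.

Lemma Cminus_0_r (z : C) : (z - 0)%C = z.
Proof. ring. Qed.

Lemma Cminus_sub_1 (z : C) : (1 - z - 1)%C = (- z)%C.
Proof. ring. Qed.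

Definition nonneg_comb (T : list C) (s : R) (v : C) : Prop :=
  exists l : list R,
    List.length l = List.length T /\ List.Forall (fun t => 0 <= t) l /\
    fold_right Rplus 0 l = s /\
    fold_right Cplus (RtoC 0)
      (map (fun q : R * C => (RtoC (fst q) * snd q)%C) (combine l T)) = v.

Lemma nonneg_comb_0 (T : list C) : nonneg_comb T 0 (RtoC 0).
Proof.
  induction T as [|x T [l [Hlen [Hpos [Hsum Hcomb]]]]].
  - now exists nil.
  - exists (0 :: l); simpl; rewrite Hlen, Hsum, Hcomb; repeat split.
    + constructor; [lra | exact Hpos].
    + ring.
    + apply C_ext; simpl; ring.
Qed.

Lemma nonneg_comb_In (T : list C) (x : C) (w : R) :
  In x T -> 0 <= w -> nonneg_comb T w (RtoC w * x)%C.
Proof.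
  intros Hx Hw; induction T as [|y T IH]; [destruct Hx|].
  destruct Hx as [<- | Hx].
  - destruct (nonneg_comb_0 T) as [l [Hlen [Hpos [Hsum Hcomb]]]].
    exists (w :: l); simpl; rewrite Hlen, Hsum, Hcomb; repeat split.
    + now constructor.
    + ring.
    + apply C_ext; simpl; ring.
  - destruct (IH Hx) as [l [Hlen [Hpos [Hsum Hcomb]]]].
    exists (0 :: l); simpl; rewrite Hlen, Hsum, Hcomb; repeat split.
    + constructor; [lra | exact Hpos].
    + ring.
    + apply C_ext; simpl; ring.
Qed.

Lemma nonneg_comb_add (T : list C) (s1 s2 : R) (v1 v2 : C) :
  nonneg_comb T s1 v1 -> nonneg_comb T s2 v2 -> nonneg_comb T (s1 + s2) (v1 + v2)%C.
Proof.
  revert s1 s2 v1 v2; induction T as [|x T IH];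
    intros s1 s2 v1 v2 [l1 [Hlen1 [Hpos1 [<- <-]]]] [l2 [Hlen2 [Hpos2 [<- <-]]]].
  - destruct l1, l2; try discriminate.
    exists nil; simpl; repeat split; [constructor | ring | ring].
  - destruct l1 as [|t1 l1], l2 as [|t2 l2]; try discriminate.
    inversion Hpos1 as [|? ? Ht1 Hl1]; inversion Hpos2 as [|? ? Ht2 Hl2]; subst.
    edestruct IH as [l [Hlen [Hpos [Hsum Hcomb]]]];
      [exists l1; repeat split; eauto | exists l2; repeat split; eauto |].
    exists (t1 + t2 :: l); simpl; rewrite Hlen, Hsum, Hcomb; repeat split.
    + constructor; [lra | exact Hpos].
    + ring.
    + apply C_ext; simpl; ring.
Qed.

Definition cross (u v : C) : R := fst u * snd v - snd u * fst v.

(* For plane vectors, [cross v w * u + cross w u * v + cross u v * w = 0]; with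
   [u, v, w] the vertices seen from [o], normalising the three cross products
   gives the barycentric coordinates of [o]. *)
Lemma in_co_triangle (T : list C) (o p q s : C) :
  In p T -> In q T -> In s T ->
  cross (p - o) (q - o) < 0 -> cross (q - o) (s - o) < 0 -> cross (s - o) (p - o) < 0 ->
  in_co T o.
Proof.
  intros Hp Hq Hs Hpq Hqs Hsp.
  set (D := cross (q - o) (s - o) + cross (s - o) (p - o) + cross (p - o) (q - o)).
  assert (HD : D < 0) by (unfold D; lra).
  assert (weight_nonneg : forall x, x < 0 -> 0 <= x / D).
  { intros x Hx; apply Rlt_le; unfold Rdiv; apply Rmult_neg_neg; [exact Hx|].
    now apply Rinv_lt_0_compat. }
  destruct (nonneg_comb_add _ _ _ _ _
              (nonneg_comb_add _ _ _ _ _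
                 (nonneg_comb_In T p _ Hp (weight_nonneg _ Hqs))
                 (nonneg_comb_In T q _ Hq (weight_nonneg _ Hsp)))
              (nonneg_comb_In T s _ Hs (weight_nonneg _ Hpq)))
    as [l [Hlen [Hpos [Hsum Hcomb]]]].
  exists l; repeat split; trivial.
  - rewrite Hsum; unfold D; field; lra.
  - rewrite Hcomb; unfold D in *; unfold cross in *.
    destruct p as [p1 p2], q as [q1 q2], s as [s1 s2], o as [o1 o2]; simpl in *.
    apply C_ext; simpl; field; lra.
Qed.

Definition polar (rho alpha : R) : C := (rho * cos alpha, rho * sin alpha).

Lemma polar_mul (rho sigma alpha beta : R) :
  (polar rho alpha * polar sigma beta)%C = polar (rho * sigma) (alpha + beta).
Proof. unfold polar; rewrite cos_plus, sin_plus; apply C_ext; simpl; ring. Qed.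

Lemma polar_pow (rho alpha : R) (n : nat) :
  (polar rho alpha ^ n)%C = polar (rho ^ n) (INR n * alpha).
Proof.
  induction n as [|n IH].
  - unfold polar; simpl; rewrite Rmult_0_l, cos_0, sin_0; apply C_ext; simpl; ring.
  - change (polar rho alpha ^ S n)%C with (polar rho alpha * polar rho alpha ^ n)%C.
    rewrite IH, polar_mul, S_INR; f_equal; ring.
Qed.

Lemma cross_polar (rho sigma alpha beta : R) :
  cross (polar rho alpha) (polar sigma beta) = rho * sigma * sin (beta - alpha).
Proof. unfold cross, polar; rewrite sin_minus; simpl; ring. Qed.

Lemma cross_1_l (v : C) : cross 1 v = snd v.
Proof. unfold cross; simpl; ring. Qed.

Lemma cross_1_r (v : C) : cross v 1 = - snd v.
Proof. unfold cross; simpl; ring. Qed.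

Lemma cross_subl (u v w : C) : cross (u - v) w = cross u w - cross v w.
Proof. unfold cross; simpl; ring. Qed.

Lemma cross_subr (u v w : C) : cross u (v - w) = cross u v - cross u w.
Proof. unfold cross; simpl; ring. Qed.

Lemma cross_oppl (u v : C) : cross (- u) v = - cross u v.
Proof. unfold cross; simpl; ring. Qed.

Lemma cross_oppr (u v : C) : cross u (- v) = - cross u v.
Proof. unfold cross; simpl; ring. Qed.

Lemma snd_polar (rho alpha : R) : snd (polar rho alpha) = rho * sin alpha.
Proof. reflexivity. Qed.

Lemma zero_in_co_polar_triangle (T : list C) (r1 r2 r3 th e : R) :
  0 < r1 -> 0 < r2 -> 0 < r3 ->
  0 < sin e -> 0 < sin (2 * e) -> 0 < sin th -> sin (th + 2 * e) < 0 ->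
  In (polar r1 (- th)) T -> In (polar r2 (- (th + 2 * e))) T ->
  In (1 - polar r3 (- (th + e)))%C T ->
  in_co T 0.
Proof.
  intros Hr1 Hr2 Hr3 He H2e Hth Hth2 Hp Hq Hs.
  apply (in_co_triangle _ _ _ _ _ Hp Hq Hs); rewrite !Cminus_0_r.
  - rewrite cross_polar.
    replace (- (th + 2 * e) - - th) with (- (2 * e)) by ring; rewrite sin_neg.
    assert (0 < r1 * r2) by now apply Rmult_lt_0_compat. nra.
  - rewrite cross_subr, cross_1_r, cross_polar, snd_polar, sin_neg.
    replace (- (th + e) - - (th + 2 * e)) with e by ring.
    assert (0 < r2 * r3) by now apply Rmult_lt_0_compat. nra.
  - rewrite cross_subl, cross_1_l, cross_polar, snd_polar, sin_neg.
    replace (- th - - (th + e)) with e by ring.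
    assert (0 < r3 * r1) by now apply Rmult_lt_0_compat. nra.
Qed.

Lemma one_in_co_polar_triangle (T : list C) (r0 r1 r2 x e : R) :
  0 < r1 -> 0 < r2 ->
  0 < sin e -> 0 < sin (x - e) -> sin x < r0 * sin (x - e) ->
  In (polar r0 (- e)) T -> In (1 - polar r1 (- e))%C T -> In (1 - polar r2 (- x))%C T ->
  in_co T 1.
Proof.
  intros Hr1 Hr2 He Hxe Hx Hp Hq Hs.
  apply (in_co_triangle _ _ _ _ _ Hp Hq Hs);
    rewrite ?(Cminus_sub_1 (polar r1 _)), ?(Cminus_sub_1 (polar r2 _)).
  - rewrite cross_oppr, cross_subl, cross_polar, cross_1_l, snd_polar, sin_neg.
    replace (- e - - e) with 0 by ring; rewrite sin_0.
    assert (0 < r1 * sin e) by now apply Rmult_lt_0_compat. lra.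
  - rewrite cross_oppl, cross_oppr, cross_polar.
    replace (- x - - e) with (- (x - e)) by ring; rewrite sin_neg.
    assert (0 < r1 * r2) by now apply Rmult_lt_0_compat. nra.
  - rewrite cross_oppl, cross_subr, cross_polar, cross_1_r, snd_polar, sin_neg.
    replace (- e - - x) with (x - e) by ring. nra.
Qed.

Lemma sin_lt_of_sin_add_neg (x e : R) :
  0 < cos e -> sin (x + e) < 0 -> sin x < / (2 * cos e) * sin (x - e).
Proof.
  intros Hcos Hxe.
  assert (Hsum : sin (x + e) + sin (x - e) = 2 * cos e * sin x)
    by (rewrite sin_plus, sin_minus; ring).
  apply Rmult_lt_reg_l with (2 * cos e); [lra|].
  rewrite <- Rmult_assoc, Rinv_r by lra; lra.
Qed.

Lemma z_of_In_V (eta : R) (k j : nat) : (j <= k)%nat -> In (z_of eta j) (V_of eta k).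
Proof. intros Hj; right; apply in_or_app; left; apply in_map, in_seq; lia. Qed.

Lemma w_of_In_V (eta : R) (k j : nat) : (1 <= j <= k)%nat -> In (w_of eta j) (V_of eta k).
Proof. intros Hj; right; apply in_or_app; right; apply in_map, in_seq; lia. Qed.

Section Vertices.

Variable eta : R.
Hypothesis eta_pos : 0 < eta.
Hypothesis eta_lt_PI3 : eta < PI / 3.

Let cos_gt_half : 1 / 2 < cos eta.
Proof. rewrite <- cos_PI3; apply cos_decreasing_1; pose proof PI_RGT_0; lra. Qed.

Lemma absa_of : absa eta = / (2 * cos eta).
Proof.
  unfold absa, Cmod, a_of; simpl.
  replace (cos eta / (2 * cos eta) * (cos eta / (2 * cos eta) * 1) +
           - sin eta / (2 * cos eta) * (- sin eta / (2 * cos eta) * 1))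
    with ((/ (2 * cos eta)) ^ 2).
  - apply sqrt_pow2, Rlt_le, Rinv_0_lt_compat; lra.
  - pose proof (sin2_cos2 eta) as Hpyth; unfold Rsqr in Hpyth.
    transitivity ((sin eta * sin eta + cos eta * cos eta) / (2 * cos eta) ^ 2);
      [rewrite Hpyth|]; field; lra.
Qed.

Lemma absa_pos : 0 < absa eta.
Proof. rewrite absa_of; apply Rinv_0_lt_compat; lra. Qed.

Lemma absa_lt_1 : absa eta < 1.
Proof. rewrite absa_of, <- Rinv_1; apply Rinv_lt_contravar; lra. Qed.

Lemma c_of_ge_1 : 1 <= c_of eta.
Proof.
  pose proof absa_pos; pose proof absa_lt_1.
  assert (Hr4 : 0 < absa eta ^ 4 < 1).
  { split; [now apply pow_lt|]. apply pow_lt_1_compat; [lra | lia]. }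
  unfold c_of; apply Rmult_le_reg_r with (1 - absa eta ^ 4); [lra|].
  field_simplify; lra.
Qed.

Lemma a_of_polar : a_of eta = polar (absa eta) (- eta).
Proof.
  rewrite absa_of; unfold a_of, polar; rewrite cos_neg, sin_neg.
  apply C_ext; simpl; field; lra.
Qed.

Lemma z_of_polar (j : nat) :
  z_of eta j = polar (c_of eta * absa eta ^ S j) (- (INR (S j) * eta)).
Proof.
  unfold z_of; rewrite a_of_polar, polar_pow.
  unfold polar; apply C_ext; simpl; rewrite ?Ropp_mult_distr_r; ring.
Qed.

Lemma w_of_polar (j : nat) :
  w_of eta j = (1 - polar (c_of eta * absa eta ^ S (S j)) (- (INR j * eta)))%C.
Proof.
  unfold w_of; rewrite a_of_polar, polar_pow.
  unfold polar; apply C_ext; simpl; rewrite ?Ropp_mult_distr_r; ring.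
Qed.

Let radius_pos (n : nat) : 0 < c_of eta * absa eta ^ n.
Proof.
  pose proof c_of_ge_1; pose proof absa_pos.
  apply Rmult_lt_0_compat; [lra | now apply pow_lt].
Qed.

Let sin_eta_pos : 0 < sin eta.
Proof. apply sin_gt_0; pose proof PI_RGT_0; lra. Qed.

Variable k : nat.
Hypothesis k_ge_2 : (2 <= k)%nat.
Hypothesis sin_pred_pos : 0 < sin ((INR k - 1) * eta).
Hypothesis sin_succ_neg : sin ((INR k + 1) * eta) < 0.

Lemma zero_in_co_V : in_co (V_of eta k) 0.
Proof.
  assert (Hpred : INR (S (k - 2)) = INR k - 1)
    by (rewrite S_INR, minus_INR by lia; simpl; ring).
  apply (zero_in_co_polar_triangle _ (c_of eta * absa eta ^ S (k - 2))
           (c_of eta * absa eta ^ S k) (c_of eta * absa eta ^ S (S k))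
           ((INR k - 1) * eta) eta
           (radius_pos _) (radius_pos _) (radius_pos _) sin_eta_pos).
  - apply sin_gt_0; pose proof PI_RGT_0; lra.
  - exact sin_pred_pos.
  - now replace ((INR k - 1) * eta + 2 * eta) with ((INR k + 1) * eta) by ring.
  - rewrite <- Hpred, <- z_of_polar; apply z_of_In_V; lia.
  - replace ((INR k - 1) * eta + 2 * eta) with (INR (S k) * eta) by (rewrite S_INR; ring).
    rewrite <- z_of_polar; apply z_of_In_V; lia.
  - replace ((INR k - 1) * eta + eta) with (INR k * eta) by ring.
    rewrite <- w_of_polar; apply w_of_In_V; lia.
Qed.

Lemma one_in_co_V : in_co (V_of eta k) 1.
Proof.
  assert (Hone : - eta = - (INR 1 * eta)) by (simpl; ring).
  apply (one_in_co_polar_triangle _ (c_of eta * absa eta ^ 1)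
           (c_of eta * absa eta ^ 3) (c_of eta * absa eta ^ S (S k)) (INR k * eta) eta
           (radius_pos _) (radius_pos _) sin_eta_pos).
  - now replace (INR k * eta - eta) with ((INR k - 1) * eta) by ring.
  - pose proof c_of_ge_1; pose proof absa_pos.
    replace (INR k * eta - eta) with ((INR k - 1) * eta) by ring.
    apply Rlt_le_trans with (absa eta * sin ((INR k - 1) * eta)).
    + rewrite absa_of; replace ((INR k - 1) * eta) with (INR k * eta - eta) by ring.
      apply sin_lt_of_sin_add_neg; [lra|].
      now replace (INR k * eta + eta) with ((INR k + 1) * eta) by ring.
    + simpl; rewrite Rmult_1_r; apply Rmult_le_compat_r; nra.
  - rewrite Hone, <- z_of_polar; apply z_of_In_V; lia.
  - rewrite Hone, <- w_of_polar; apply w_of_In_V; lia.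
  - rewrite <- w_of_polar; apply w_of_In_V; lia.
Qed.

End Vertices.

Lemma angle_window (k : nat) (eta : R) :
  (4 <= k)%nat -> PI / (INR k + 1) < eta < PI / (INR k - 1) ->
  0 < eta < PI / 3 /\ 0 < (INR k - 1) * eta < PI /\ PI < (INR k + 1) * eta < 2 * PI.
Proof.
  intros Hk [Hlo Hhi].
  assert (HK : 4 <= INR k) by (pose proof (le_INR 4 k Hk) as H4; simpl in H4; lra).
  pose proof PI_RGT_0.
  assert (Hpos : 0 < eta) by (apply Rlt_trans with (PI / (INR k + 1)); [apply Rdiv_lt_0_compat|]; lra).
  assert (Hpred : (INR k - 1) * eta < PI).
  { apply Rlt_le_trans with ((INR k - 1) * (PI / (INR k - 1))).
    - apply Rmult_lt_compat_l; lra.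
    - right; field; lra. }
  assert (Hsucc : PI < (INR k + 1) * eta).
  { apply Rle_lt_trans with ((INR k + 1) * (PI / (INR k + 1))).
    - right; field; lra.
    - apply Rmult_lt_compat_l; lra. }
  repeat split; nra.
Qed.

Theorem lemma6p3 (k : nat) (eta_k eta_k1 eta : R) :
  (4 <= k)%nat ->
  PI / INR k < eta_k < PI / (INR k - 1) -> Phi k eta_k = 0 ->
  PI / (INR k + 1) < eta_k1 < PI / INR k -> Phi (S k) eta_k1 = 0 ->
  eta_k1 <= eta < eta_k ->
  in_co (V_of eta k) (RtoC 0) /\ in_co (V_of eta k) (RtoC 1).
Proof.
  intros Hk [_ Hk_hi] _ [Hk1_lo _] _ [Hlo Hhi].
  destruct (angle_window k eta Hk ltac:(lra))
    as [[Hpos HPI3] [[Hpred_pos Hpred] [Hsucc Hsucc2]]].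
  assert (Hk2 : (2 <= k)%nat) by lia.
  assert (Hsin_pred : 0 < sin ((INR k - 1) * eta)) by (apply sin_gt_0; lra).
  assert (Hsin_succ : sin ((INR k + 1) * eta) < 0) by (apply sin_lt_0; lra).
  split.
  - exact (zero_in_co_V eta Hpos HPI3 k Hk2 Hsin_pred Hsin_succ).
  - exact (one_in_co_V eta Hpos HPI3 k Hk2 Hsin_pred Hsin_succ).
Qed.
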